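(* Let $n\ge 2$, let $v_1<\cdots<v_{n-1}$ be positive integers with $\mathrm{ML}(v_1,\ldots,v_{n-1})\ge L$, and fix $0<\varepsilon<L$. Then for every positive integer $v_n$ with $v_n\ge \left(\frac{L-\varepsilon}{\varepsilon}\right)v_{n-1}$, we have $\mathrm{ML}(v_1,\ldots,v_n)\ge L-\varepsilon$.
   Context: For a real number $x$, $\Vert x\Vert$ denotes the distance from $x$ to the nearest integer. For positive integers $v_1,\ldots,v_k$, the maximum loneliness is $\mathrm{ML}(v_1,\ldots,v_k)=\max_{t\in\mathbb{R}}\min_{1\le i\le k}\Vert t v_i\Vert$. *)

From HB Require Import structures.
From mathcomp Require Import all_boot all_order all_algebra.
From mathcomp Require Import all_classical all_reals.
Set Implicit Arguments. Unset Strict Implicit. Unset Printing Implicit Defensive.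
Import Order.TTheory GRing.Theory Num.Theory.
Local Open Scope ring_scope.
Local Open Scope classical_set_scope.

Definition dist_int {R : realType} (x : R) : R :=
  Num.min (x - (Num.floor x)%:~R) ((Num.floor x + 1)%:~R - x).

(* min_i ||t v_i|| for a (nonempty) list of positive integers v
   (the neutral element 1 is irrelevant on nonempty lists, as ||.|| <= 1/2) *)
Definition min_lonely {R : realType} (v : seq nat) (t : R) : R :=
  \big[Num.min/1]_(vi <- v) dist_int (t * vi%:R).

(* ML(v) = max_t min_i ||t v_i||, written as the supremum over t
   (the maximum is attained, so it equals the sup) *)
Definition ML {R : realType} (v : seq nat) : R :=
  sup (range (@min_lonely R v)).

(* Take a time t0 at which v_1, ..., v_(n-1) are almost L-lonely and put
   c = L - eps.  On the window |t - t0| <= c / v_n each ||t v_i||, i < n, moves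
   by at most (c / v_n) v_(n-1) <= eps, while t v_n sweeps an interval of
   length 2c, which contains a point at distance at least c from the integers
   since c <= 1/2. *)
From mathcomp Require Import all_boot all_order all_algebra.
From mathcomp Require Import all_classical all_reals.
From mathcomp Require Import lra zify.
Import Order.TTheory GRing.Theory Num.Theory.
Local Open Scope ring_scope.

Section Loneliness.
Context {R : realType}.
Implicit Types (x y t c : R) (s : seq nat) (v w m : nat).

Lemma dist_int_attained x : exists k : int, dist_int x = `|x - k%:~R|.
Proof.
have /andP[fl_le lt_fl1] := floor_itv x; rewrite /dist_int.
have [lo|hi] := lerP (x - (Num.floor x)%:~R) ((Num.floor x + 1)%:~R - x).
  by exists (Num.floor x); rewrite ger0_norm // subr_ge0.
exists (Num.floor x + 1); rewrite ler0_norm ?opprB //.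
by rewrite subr_le0 ltW.
Qed.

Lemma dist_int_le_norm x (k : int) : dist_int x <= `|x - k%:~R|.
Proof.
have /andP[fl_le lt_fl1] := floor_itv x; rewrite /dist_int ge_min.
have [k_le|lt_k] := lerP k (Num.floor x).
  have : k%:~R <= (Num.floor x)%:~R :> R by rewrite ler_int.
  have := ler_norm (x - k%:~R); lra.
have : (Num.floor x + 1)%:~R <= k%:~R :> R by rewrite ler_int; lia.
have := ler_norm (k%:~R - x); rewrite distrC; lra.
Qed.

Lemma dist_int_lipschitz x y : dist_int x <= dist_int y + `|x - y|.
Proof.
have [k ->] := dist_int_attained y.
by apply: le_trans (dist_int_le_norm x k) _; rewrite [leRHS]addrC ler_distD.
Qed.

Lemma dist_int_le_half x : dist_int x <= 1 / 2.
Proof.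
rewrite /dist_int intrD ge_min.
by case: (lerP (x - (Num.floor x)%:~R) (1 / 2)) => h; apply/orP; [left|right]; lra.
Qed.

Lemma dist_int_ge_between (k : int) c y :
  k%:~R + c <= y -> y <= k%:~R + 1 - c -> c <= dist_int y.
Proof.
move=> lo hi; have [j ->] := dist_int_attained y.
have [j_le|lt_j] := lerP j k.
  have : j%:~R <= k%:~R :> R by rewrite ler_int.
  have := ler_norm (y - j%:~R); lra.
have : (k + 1)%:~R <= j%:~R :> R by rewrite ler_int; lia.
have := ler_norm (j%:~R - y); rewrite distrC intrD; lra.
Qed.

Lemma exists_dist_int_ge_near x0 c :
  0 <= c -> c <= 1 / 2 -> exists2 y, `|y - x0| <= c & c <= dist_int y.
Proof.
move=> c_ge0 c_le_half; set k := Num.floor x0.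
have /andP[fl_le lt_fl1] := floor_itv x0; rewrite -/k intrD in lt_fl1.
have [lt_x0c|le_x0c] := ltrP (x0 - c) (k%:~R + c).
  exists (k%:~R + c); last by apply: (dist_int_ge_between k); lra.
  by rewrite ler_norml; apply/andP; split; lra.
exists (x0 - c); last by apply: (dist_int_ge_between k); lra.
by rewrite addrAC subrr add0r normrN ger0_norm.
Qed.

Lemma min_lonely_le {s} t {v} : v \in s -> min_lonely s t <= dist_int (t * v%:R).
Proof.
rewrite /min_lonely; elim: s => [|a s IH] //; rewrite in_cons big_cons ge_min.
by case/orP=> [/eqP->|/IH->]; rewrite ?lexx ?orbT.
Qed.

Lemma min_lonely_le1 s t : min_lonely s t <= 1.
Proof.
apply: (big_ind (fun z => z <= 1)) => // [a b a_le1 _ | v _].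
  by rewrite ge_min a_le1.
by have := dist_int_le_half (t * v%:R); lra.
Qed.

Lemma min_lonely_ge s t c :
  c <= 1 -> (forall v, v \in s -> c <= dist_int (t * v%:R)) ->
  c <= min_lonely s t.
Proof.
move=> c_le1 c_le; rewrite /min_lonely big_seq.
by apply: (big_ind (fun z => c <= z)) => // a b; rewrite le_min => -> ->.
Qed.

Lemma min_lonely_lipschitz {s w} t t0 :
  (forall v, v \in s -> (v <= w)%N) ->
  min_lonely s t0 - `|t - t0| * w%:R <= min_lonely s t.
Proof.
move=> le_w; apply: min_lonely_ge => [|v vs].
  have := min_lonely_le1 s t0.
  have : 0 <= `|t - t0| * w%:R by rewrite mulr_ge0.
  lra.
have shift : `|t0 * v%:R - t * v%:R| <= `|t - t0| * w%:R.
  rewrite -mulrBl normrM normr_nat distrC.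
  by apply: ler_wpM2l => //; rewrite ler_nat le_w.
have := dist_int_lipschitz (t0 * v%:R) (t * v%:R).
have := min_lonely_le t0 vs; lra.
Qed.

Section NonemptyList.
Context {s : seq nat} (s_neq0 : s != [::]).

Lemma min_lonely_le_half t : min_lonely s t <= 1 / 2.
Proof.
case: s s_neq0 => [|v s'] // _.
exact: le_trans (min_lonely_le t (mem_head v s')) (dist_int_le_half _).
Qed.

Lemma has_sup_min_lonely : has_sup (range (@min_lonely R s)).
Proof.
split; first by exists (min_lonely s (0 : R)), 0.
by exists (1 / 2) => _ [t _ <-]; apply: min_lonely_le_half.
Qed.

Lemma min_lonely_le_ML t : min_lonely s t <= ML s.
Proof. by apply: ub_le_sup; [case: has_sup_min_lonely | exists t]. Qed.

Lemma ML_le_half : ML s <= 1 / 2 :> R.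
Proof.
apply: ge_sup; first by exists (min_lonely s (0 : R)), 0.
by move=> _ [t _ <-]; apply: min_lonely_le_half.
Qed.

End NonemptyList.

Lemma ML_cat1_ge {s w m} c :
  s != [::] -> (forall v, v \in s -> (v <= w)%N) -> (0 < m)%N ->
  0 <= c -> c + c * w%:R / m%:R <= ML s -> c <= ML (s ++ [:: m]).
Proof.
move=> s_neq0 le_w m_gt0 c_ge0 c_le_ML.
have m_gt0R : 0 < m%:R :> R by rewrite ltr0n.
have loss_ge0 : 0 <= c * w%:R / m%:R by rewrite !mulr_ge0 ?invr_ge0 ?ler0n.
have c_le_half : c <= 1 / 2 by have := ML_le_half s_neq0; lra.
have sm_neq0 : s ++ [:: m] != [::] by rewrite -size_eq0 size_cat addn1.
apply/ler_addgt0Pr => e e_gt0.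
have [_ [t0 _ <-] t0_good] := sup_adherent e_gt0 (has_sup_min_lonely s_neq0).
rewrite -/(ML s) in t0_good.
have [y y_near c_le_y] := exists_dist_int_ge_near (t0 * m%:R) c c_ge0 c_le_half.
set t := y / m%:R.
have tm : t * m%:R = y by rewrite mulfVK ?gt_eqF.
have t_near : `|t - t0| * w%:R <= c * w%:R / m%:R.
  rewrite mulrAC; apply: ler_wpM2r; first exact: ler0n.
  by rewrite ler_pdivlMr // -(gtr0_norm m_gt0R) -normrM mulrBl tm.
have old_ok := min_lonely_lipschitz t t0 le_w.
have new_ok : c - e <= min_lonely (s ++ [:: m]) t.
  apply: min_lonely_ge => [|v]; first lra.
  rewrite mem_cat => /orP[vs|]; last by rewrite inE => /eqP->; rewrite tm; lra.
  have := min_lonely_le t vs; lra.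
have := min_lonely_le_ML sm_neq0 t; lra.
Qed.

End Loneliness.

Theorem proposition8p1 (R : realType) (n : nat) (v : nat -> nat) (L eps : R) :
  (2 <= n)%N ->
  (forall i, (1 <= i <= n.-1)%N -> (0 < v i)%N) ->
  (forall i, (1 <= i)%N -> (i < n.-1)%N -> (v i < v i.+1)%N) ->
  L <= ML [seq v i | i <- iota 1 n.-1] ->
  0 < eps -> eps < L ->
  forall vn : nat, (0 < vn)%N ->
    ((L - eps) / eps) * (v n.-1)%:R <= vn%:R ->
    L - eps <= ML ([seq v i | i <- iota 1 n.-1] ++ [:: vn]).
Proof.
move=> n_ge2 _ v_incr L_le_ML eps_gt0 eps_lt_L vn vn_gt0 vn_large.
set s := [seq v i | i <- iota 1 n.-1] in L_le_ML *.
have s_neq0 : s != [::] by rewrite -size_eq0 size_map size_iota; lia.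
have v_mono : {in mem (iota 1 n.-1) &, {homo v : i j / (i <= j)%N}}.
  apply: homo_leq_in => [//|j i k|i j i_in j_in k|i]; first exact: leq_trans.
    by move: i_in j_in; rewrite !mem_iota; lia.
  by rewrite !mem_iota => ? ?; apply/ltnW/v_incr; lia.
have le_last : forall x, x \in s -> (x <= v n.-1)%N.
  move=> _ /mapP[i i_in ->].
  by apply: v_mono; move: i_in; rewrite ?mem_iota; lia.
apply: (ML_cat1_ge (L - eps) s_neq0 le_last vn_gt0); first lra.
suff : (L - eps) * (v n.-1)%:R / vn%:R <= eps by lra.
rewrite ler_pdivrMr ?ltr0n // [leRHS]mulrC.
by rewrite mulrAC ler_pdivrMr in vn_large.
Qed.
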